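(* Let $q\ge 2$ and $n\ge 1$ be integers and let $m=n+1$. Under uniform transmission over the $1$-insertion channel with input length $n$, $$\min_{{\boldsymbol y}\in\Sigma_q^{m}} \mathsf{H}^{\mathsf{In}}_{1\text{-}\mathsf{Ins}}({\boldsymbol y}) = 0,$$ and this minimum is attained only by channel outputs having a single run.
   Context: $\Sigma_q=\{0,1,\dots,q-1\}$. For sequences ${\boldsymbol x}$ of length $\ell$ and ${\boldsymbol y}$ of length $N\ge \ell$, the embedding number $\omega_{{\boldsymbol x}}({\boldsymbol y})$ is the number of index tuples $1\le i_1<\dots<i_\ell\le N$ with $y_{i_j}=x_j$ for all $j$. The $k$-insertion channel with input length $n$ maps ${\boldsymbol x}\in\Sigma_q^n$ to ${\boldsymbol y}\in\Sigma_q^{n+k}$ with probability $\Pr\{{\boldsymbol y}\mid{\boldsymbol x}\}=\omega_{{\boldsymbol x}}({\boldsymbol y})/\big(\binom{n+k}{k}q^k\big)$. Under uniform transmission the input $X$ is uniform on $\Sigma_q^n$, and for an output ${\boldsymbol y}$ the input entropy is $\mathsf{H}^{\mathsf{In}}_{k\text{-}\mathsf{Ins}}({\boldsymbol y})=H(X\mid Y={\boldsymbol y})=-\sum_{{\boldsymbol x}}P({\boldsymbol x}\mid{\boldsymbol y})\log_2 P({\boldsymbol x}\mid{\boldsymbol y})$ with $P({\boldsymbol x}\mid {\boldsymbol y})=\Pr\{{\boldsymbol y}\mid{\boldsymbol x}\}/\sum_{{\boldsymbol x}'\in\Sigma_q^n}\Pr\{{\boldsymbol y}\mid{\boldsymbol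 x}'\}$. A run is a maximal block of identical consecutive symbols. *)

From mathcomp Require Import all_boot all_order all_algebra.
From mathcomp Require Import reals exp.
Set Implicit Arguments. Unset Strict Implicit. Unset Printing Implicit Defensive.
Import Order.TTheory GRing.Theory Num.Theory.
Local Open Scope ring_scope.

Definition word (q l : nat) := {ffun 'I_l -> 'I_q}.

(* Embedding number omega_x(y): number of index tuples i_1 < ... < i_l in
   {1..N} (here 0-based: strictly increasing maps 'I_l -> 'I_N) with
   y_{i_j} = x_j for all j. *)
Definition embnum (q l N : nat) (x : word q l) (y : word q N) : nat :=
  #|[set f : {ffun 'I_l -> 'I_N} |
      [forall j : 'I_l, forall j' : 'I_l, (j < j')%N ==> (f j < f j')%N]
      && [forall j : 'I_l, y (f j) == x j]]|.

Definition ins_prob (R : realType) (q n k : nat) (x : word q n) (y : word q (n + k)) : R :=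
  (embnum x y)%:R / ('C(n + k, k)%:R * (q%:R ^+ k)).

(* Posterior P(x | y) under uniform input distribution. *)
Definition posterior (R : realType) (q n k : nat) (y : word q (n + k)) (x : word q n) : R :=
  ins_prob R x y / \sum_(x' : word q n) ins_prob R x' y.

Definition log2 (R : realType) (p : R) : R := ln p / ln 2.

Definition input_entropy (R : realType) (q n k : nat) (y : word q (n + k)) : R :=
  - \sum_(x : word q n)
      (let p := posterior R y x in if p == 0 then 0 else p * log2 p).

Definition single_run (q N : nat) (y : word q N) : Prop :=
  forall i j : 'I_N, y i = y j.

From mathcomp Require Import all_boot all_order all_algebra.
From mathcomp Require Import reals exp.
From mathcomp Require Import zify.
Set Implicit Arguments. Unset Strict Implicit. Unset Printing Implicit Defensive.
Import Order.TTheory GRing.Theory Num.Theory.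
Local Open Scope ring_scope.

(* One insertion turns x into y exactly when x is y with one symbol deleted.
   A constant output has the constant word as its only possible input, so its
   posterior is a point mass and the input entropy vanishes.  If y_a <> y_(a+1)
   for some a, deleting position a or position a+1 gives two different inputs
   of positive posterior probability; one of them has posterior strictly
   between 0 and 1, and its term makes the entropy strictly positive. *)

Section Embeddings.
Variables q l N : nat.
Implicit Types (x : word q l) (y : word q N).

Lemma embnum_gt0 x y (f : 'I_l -> 'I_N) :
  {homo f : j j' / (j < j')%N} -> (forall j, y (f j) = x j) ->
  (0 < embnum x y)%N.
Proof.
move=> f_incr yfx; rewrite /embnum card_gt0; apply/set0Pn; exists (finfun f).
rewrite inE; apply/andP; split; apply/forallP => j.
  by apply/forallP => j'; apply/implyP => lt_jj'; rewrite !ffunE f_incr.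
by rewrite ffunE yfx.
Qed.

Lemma embnum_eq0 x y (j : 'I_l) : (forall i, y i != x j) -> embnum x y = 0%N.
Proof.
move=> xj_notin_y; apply/eqP; rewrite cards_eq0; apply/eqP/setP => f.
rewrite !inE; apply/negbTE/negP => /andP [_ /forallP /(_ j)].
by rewrite (negbTE (xj_notin_y (f j))).
Qed.

Lemma embnum_const_eq0 (c : 'I_q) x :
  x != [ffun=> c] -> embnum x ([ffun=> c] : word q N) = 0%N.
Proof.
move=> x_nconst; have [j x_neq_c | x_eq_c] := pickP (fun j => x j != c).
  by apply: (embnum_eq0 (j := j)) => i; rewrite ffunE eq_sym.
case/eqP: x_nconst; apply/ffunP => j; rewrite ffunE.
by apply/eqP; rewrite -[_ == _]negbK x_eq_c.
Qed.

Lemma embnum_const_gt0 (c : 'I_q) (le_lN : (l <= N)%N) :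
  (0 < embnum ([ffun=> c] : word q l) ([ffun=> c] : word q N))%N.
Proof. by apply: (embnum_gt0 (f := widen_ord le_lN)) => [//|j]; rewrite !ffunE. Qed.

End Embeddings.

Section Deletion.
Variables q n : nat.
Implicit Type y : word q (n + 1).

Lemma skip_subproof (i : 'I_(n + 1)) (j : 'I_n) : (bump i j < n + 1)%N.
Proof. by have := ltn_ord j; rewrite /bump; case: leqP; lia. Qed.

Definition skip (i : 'I_(n + 1)) (j : 'I_n) : 'I_(n + 1) :=
  Ordinal (skip_subproof i j).

Lemma skip_incr (i : 'I_(n + 1)) : {homo skip i : j j' / (j < j')%N}.
Proof. by move=> j j'; rewrite /= /bump; case: leqP; case: leqP; lia. Qed.

Definition del_at y (i : 'I_(n + 1)) : word q n := [ffun j => y (skip i j)].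

Lemma embnum_del_at_gt0 y i : (0 < embnum (del_at y i) y)%N.
Proof. by apply: (embnum_gt0 (f := skip i)) => [|j]; [apply: skip_incr | rewrite ffunE]. Qed.

Lemma del_at_adjacent_neq y (a b : 'I_(n + 1)) :
  a.+1 = b :> nat -> y a != y b -> del_at y a != del_at y b.
Proof.
move=> ab; have a_lt_n : (a < n)%N by have := ltn_ord b; lia.
pose j : 'I_n := Ordinal a_lt_n.
have -> : y b = del_at y a j.
  by rewrite ffunE; congr (y _); apply: val_inj; rewrite /= /bump leqnn.
have -> : y a = del_at y b j.
  by rewrite ffunE; congr (y _); apply: val_inj; rewrite /= /bump; case: leqP; lia.
by apply: contra_neq => ->.
Qed.

End Deletion.

Lemma single_run_of_adjacent (q N : nat) (y : word q N) :
  (forall a b : 'I_N, a.+1 = b :> nat -> y a = y b) -> single_run y.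
Proof.
move=> y_adj i j; have N_gt0 : (0 < N)%N by apply: leq_ltn_trans (ltn_ord i).
pose o : 'I_N := Ordinal N_gt0.
suff y_eq_o (m : 'I_N) : y m = y o by rewrite !y_eq_o.
case: m => m; elim: m => [|m IHm] lt_mN; first by congr (y _); apply: val_inj.
have lt_m'N : (m < N)%N by apply: ltnW.
by rewrite -(IHm lt_m'N); symmetry; apply: y_adj.
Qed.

Definition xlog2x (R : realType) (p : R) : R := if p == 0 then 0 else p * log2 p.

Lemma xlog2x_le0 (R : realType) (p : R) : 0 <= p <= 1 -> xlog2x p <= 0.
Proof.
case/andP => p_ge0 p_le1; rewrite /xlog2x /log2; case: eqP => // _.
rewrite mulr_ge0_le0 // mulr_le0_ge0 ?ln_le0 // invr_ge0 ltW // ln_gt0 //.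
by rewrite ltr1n.
Qed.

Lemma xlog2x_lt0 (R : realType) (p : R) : 0 < p < 1 -> xlog2x p < 0.
Proof.
move=> p01; case/andP: (p01) => p_gt0 _; rewrite /xlog2x /log2 gt_eqF //.
rewrite pmulr_rlt0 // pmulr_llt0 ?ln_lt0 // invr_gt0 ln_gt0 //.
by rewrite ltr1n.
Qed.

Lemma xlog2x1 (R : realType) : xlog2x (1 : R) = 0.
Proof. by rewrite /xlog2x /log2 ln1 mul0r mulr0 if_same. Qed.

Section InputEntropy.
Variables (R : realType) (q n k : nat) (y : word q (n + k)).
Implicit Type x : word q n.

Lemma input_entropyE :
  input_entropy R y = - \sum_(x : word q n) xlog2x (posterior R y x).
Proof. by []. Qed.

Lemma ins_prob_ge0 x : 0 <= ins_prob R x y.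
Proof. by rewrite /ins_prob divr_ge0 // mulr_ge0 // exprn_ge0. Qed.

Lemma ins_prob_gt0 x : (0 < q)%N -> (0 < embnum x y)%N -> 0 < ins_prob R x y.
Proof.
move=> q_gt0 emb_gt0; rewrite /ins_prob divr_gt0 ?ltr0n //.
by rewrite mulr_gt0 ?exprn_gt0 ?ltr0n // bin_gt0 leq_addl.
Qed.

Lemma ins_prob_le_sum x : ins_prob R x y <= \sum_(x' : word q n) ins_prob R x' y.
Proof. by rewrite (bigD1 x) //= lerDl; apply: sumr_ge0 => *; apply: ins_prob_ge0. Qed.

Lemma posterior_bounds x : 0 <= posterior R y x <= 1.
Proof.
rewrite /posterior; set S := \sum_(x' : word q n) _.
have [-> | S_neq0] := eqVneq S 0; first by rewrite invr0 mulr0 lexx ler01.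
have S_gt0 : 0 < S.
  by rewrite lt_def S_neq0 (le_trans (ins_prob_ge0 x)) ?ins_prob_le_sum.
rewrite divr_ge0 ?ins_prob_ge0 ?(ltW S_gt0) //= ler_pdivrMr // mul1r.
exact: ins_prob_le_sum.
Qed.

Lemma input_entropy_ge0 : 0 <= input_entropy R y.
Proof.
rewrite input_entropyE oppr_ge0; apply: sumr_le0 => x _.
exact/xlog2x_le0/posterior_bounds.
Qed.

Lemma input_entropy_point_mass x0 :
  0 < ins_prob R x0 y -> (forall x, x != x0 -> ins_prob R x y = 0) ->
  input_entropy R y = 0.
Proof.
move=> Px0_gt0 P_eq0.
have S_eq : \sum_(x : word q n) ins_prob R x y = ins_prob R x0 y.
  by rewrite (bigD1 x0) //= big1 ?addr0.
rewrite input_entropyE big1 ?oppr0 // => x _; rewrite /posterior S_eq.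
have [-> | x_neq] := eqVneq x x0; first by rewrite divff ?gt_eqF ?xlog2x1.
by rewrite P_eq0 // mul0r /xlog2x eqxx.
Qed.

Lemma input_entropy_gt0 x1 x2 : x1 != x2 ->
  0 < ins_prob R x1 y -> 0 < ins_prob R x2 y -> 0 < input_entropy R y.
Proof.
move=> x12 Px1_gt0 Px2_gt0; set S := \sum_(x : word q n) ins_prob R x y.
have S_ge : ins_prob R x1 y + ins_prob R x2 y <= S.
  rewrite /S (bigD1 x1) //= lerD2l (bigD1 x2) 1?eq_sym //= lerDl.
  by apply: sumr_ge0 => *; apply: ins_prob_ge0.
have S_gt0 : 0 < S by apply: lt_le_trans S_ge; apply: addr_gt0.
have post_x1 : 0 < posterior R y x1 < 1.
  rewrite /posterior -/S divr_gt0 //= ltr_pdivrMr // mul1r.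
  by apply: lt_le_trans S_ge; rewrite ltrDl.
rewrite input_entropyE oppr_gt0 (bigD1 x1) //= -[ltRHS](addr0 0).
apply: ltr_leD; first exact: xlog2x_lt0.
by apply: sumr_le0 => x _; apply/xlog2x_le0/posterior_bounds.
Qed.

End InputEntropy.

Theorem theorem8 (R : realType) (q n : nat) (hq : (2 <= q)%N) (hn : (1 <= n)%N) :
  (exists y : word q (n + 1), input_entropy R (k:=1) y = 0)
  /\ (forall y : word q (n + 1), 0 <= input_entropy R (k:=1) y)
  /\ (forall y : word q (n + 1), input_entropy R (k:=1) y = 0 -> single_run y).
Proof.
have q_gt0 : (0 < q)%N by apply: leq_trans hq.
split; [|split].
- pose c : 'I_q := Ordinal q_gt0.
  exists [ffun=> c]; apply: (input_entropy_point_mass (x0 := [ffun=> c] : word q n)).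
    by apply: ins_prob_gt0 => //; apply: embnum_const_gt0; apply: leq_addr.
  by move=> x x_nconst; rewrite /ins_prob embnum_const_eq0 // mul0r.
- exact: input_entropy_ge0.
- move=> y H0; apply: single_run_of_adjacent => a b ab; apply/eqP/contraT => yab.
  have entropy_gt0 := input_entropy_gt0 (del_at_adjacent_neq ab yab)
    (ins_prob_gt0 R q_gt0 (embnum_del_at_gt0 y a))
    (ins_prob_gt0 R q_gt0 (embnum_del_at_gt0 y b)).
  by rewrite H0 ltxx in entropy_gt0.
Qed.
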